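(* In a sufficiently small neighborhood of $s_0\in\mathbb{R}$, the signed Korányi chord length function $\operatorname{ch}_{\mathcal{H}}$ is a smooth function satisfying $\operatorname{ch}_{\mathcal{H}}'(s)>0$. Moreover, the size of such a neighborhood in $\mathbb{R}$ can be taken uniformly for all $p\in K$.
   Context: $\mathcal{H}=\mathbb{C}\times\mathbb{R}$ is the 3-dimensional Heisenberg group with coordinates $(x,y,u)$, group law $(x,y,u)\cdot(x',y',u')=(x+x',y+y',u+u'+\tfrac12(xy'-x'y))$, horizontal distribution spanned by $X=\partial_x-\tfrac12 y\,\partial_u$, $Y=\partial_y+\tfrac12 x\,\partial_u$ (orthonormal, norm $|\cdot|$). The Korányi distance is $d_{\mathcal{H}}(p,q)=\|p^{-1}q\|_{\mathcal{H}}$ with $\|(x,y,u)\|_{\mathcal{H}}=\sqrt[4]{(x^2+y^2)^2+16u^2}$. Let $K$ be a smooth Legendrian knot (closed, embedded, with horizontal velocity), parametrized by arc length $\gamma$, extended to a periodic map $\gamma\colon\mathbb{R}\to\mathcal{H}$ with period the length of $K$. Fix $p=\gamma(s_0)\in K$. The signed chord length function $\operatorname{ch}_{\mathcal{H}}\colon\mathbb{R}\to\mathbb{R}$ is defined by $\operatorname{ch}_{\mathcal{H}}(s)=d_{\mathcal{H}}(p,\gamma(s))$ for $s>s_0$, $0$ for $s=s_0$, and $-d_{\mathcal{H}}(p,\gamma(s))$ for $s<s_0$. *)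

From Stdlib Require Import Reals Lra.
From Coquelicot Require Import Coquelicot.
Open Scope R_scope.

(* Heisenberg group H = R^3 with coordinates (x,y,u). *)
Definition hpoint : Type := (R * R * R)%type.

Definition hmul (p q : hpoint) : hpoint :=
  let '(x, y, u) := p in let '(x', y', u') := q in
  (x + x', y + y', u + u' + / 2 * (x * y' - x' * y)).

Definition hinv (p : hpoint) : hpoint :=
  let '(x, y, u) := p in (- x, - y, - u).

Definition koranyi_norm (p : hpoint) : R :=
  let '(x, y, u) := p in sqrt (sqrt ((x ^ 2 + y ^ 2) ^ 2 + 16 * u ^ 2)).

Definition koranyi_dist (p q : hpoint) : R := koranyi_norm (hmul (hinv p) q).

Definition curve (gx gy gu : R -> R) (s : R) : hpoint := (gx s, gy s, gu s).

Definition smooth_fun (f : R -> R) : Prop := forall n x, ex_derive_n f n x.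

(* Legendrian knot of length L parametrized by arc length, extended
   L-periodically to R:
   - smooth coordinates;
   - horizontal velocity: u' = 1/2 (x y' - y x')
     (i.e. gamma' = x' X + y' Y);
   - arc length: |gamma'| = sqrt(x'^2 + y'^2) = 1;
   - L-periodic, and injective on [0,L) (closed embedded curve;
     hence L is the length of K). *)
Definition legendrian_knot_al (gx gy gu : R -> R) (L : R) : Prop :=
  0 < L /\
  smooth_fun gx /\ smooth_fun gy /\ smooth_fun gu /\
  (forall s, Derive gu s = / 2 * (gx s * Derive gy s - gy s * Derive gx s)) /\
  (forall s, (Derive gx s) ^ 2 + (Derive gy s) ^ 2 = 1) /\
  (forall s, curve gx gy gu (s + L) = curve gx gy gu s) /\
  (forall s t, 0 <= s < L -> 0 <= t < L ->
     curve gx gy gu s = curve gx gy gu t -> s = t).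

Definition chord_H (gx gy gu : R -> R) (s0 s : R) : R :=
  if Rlt_dec s0 s then koranyi_dist (curve gx gy gu s0) (curve gx gy gu s)
  else if Rlt_dec s s0 then - koranyi_dist (curve gx gy gu s0) (curve gx gy gu s)
  else 0.

From Stdlib Require Import Reals Lra Lia ZArith.
From Coquelicot Require Import Coquelicot.
Open Scope R_scope.

(* Write gamma(c)^-1 gamma(r) = (dx, dy, du).  Hadamard's lemma, in the form
   f r = f c + (r - c)^(k+1) * int_0^1 t^k g (c + t (r - c)) dt  when  f' = (t - c)^k g,
   gives dx = (r - c) qx and dy = (r - c) qy with smooth quotients; since the curve is
   horizontal, du' = (dx y' - dy x') / 2 = (r - c) (qx y' - qy x') / 2 vanishes to second
   order, so du = (r - c)^3 qu as well.  Hence ch(r) = (r - c) M(r)^(1/4) with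
   M = (qx^2 + qy^2)^2 + 16 (r - c)^2 qu^2 smooth and M(c) = 1, and
   ch' = (4 M + (r - c) M') / (4 M^(3/4)), where the derivatives of the quotients cancel:
   4 M + (r - c) M' = 4 (qx^2 + qy^2) (qx x' + qy y') + O((r - c)^2), which is close to 4
   because the curve has unit speed.  Every error term is controlled by a bound B on the
   second derivatives of x and y, which exists uniformly because the knot is periodic;
   so the neighbourhood of radius 1/(16 B) works for every base point. *)

Lemma Derive_n_S_Derive (f : R -> R) n x :
  Derive_n f (S n) x = Derive_n (Derive f) n x.
Proof.
  revert x; induction n as [|n IH]; intros x; [reflexivity|].
  apply Derive_ext, IH.
Qed.

Lemma ex_derive_n_S_Derive (f : R -> R) n x :
  ex_derive f x -> ex_derive_n (Derive f) n x -> ex_derive_n f (S n) x.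
Proof.
  intros Hf Hn; destruct n as [|n]; [exact Hf|].
  eapply ex_derive_ext; [|exact Hn].
  intros t; symmetry; apply Derive_n_S_Derive.
Qed.

Lemma ex_derive_n_Derive (f : R -> R) n x :
  ex_derive_n f (S n) x -> ex_derive_n (Derive f) n x.
Proof.
  intros Hn; destruct n as [|n]; [exact I|].
  eapply ex_derive_ext; [|exact Hn].
  intros t; apply Derive_n_S_Derive.
Qed.

Lemma locally_interval (a b x : R) : a < x < b -> locally x (fun y => a < y < b).
Proof.
  intros Hx. apply (open_and _ _ (open_gt a) (open_lt b)), Hx.
Qed.

Definition Cn_on (a b : R) (n : nat) (f : R -> R) : Prop :=
  forall k x, (k <= n)%nat -> a < x < b -> ex_derive_n f k x.

Section CnOn.
Variables a b : R.

Lemma Cn_on_locally n f x : Cn_on a b n f -> a < x < b ->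
  locally x (fun y => forall k, (k <= n)%nat -> ex_derive_n f k y).
Proof.
  intros Hf Hx. eapply filter_imp; [|exact (locally_interval a b x Hx)].
  intros y Hy k Hk. exact (Hf k y Hk Hy).
Qed.

Lemma Cn_on_le m n f : (m <= n)%nat -> Cn_on a b n f -> Cn_on a b m f.
Proof. intros Hmn Hf k x Hk. apply Hf; lia. Qed.

Lemma Cn_on_ex_derive n f x : Cn_on a b (S n) f -> a < x < b -> ex_derive f x.
Proof. intros Hf Hx. exact (Hf 1%nat x ltac:(lia) Hx). Qed.

Lemma Cn_on_Derive n f : Cn_on a b (S n) f -> Cn_on a b n (Derive f).
Proof. intros Hf k x Hk Hx. apply ex_derive_n_Derive, Hf; [lia|exact Hx]. Qed.

Lemma Cn_on_S n f f' : (forall x, a < x < b -> is_derive f x (f' x)) ->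
  Cn_on a b n f' -> Cn_on a b (S n) f.
Proof.
  intros Hd Hf' [|k] x Hk Hx; [exact I|].
  apply ex_derive_n_S_Derive; [eexists; exact (Hd x Hx)|].
  apply (ex_derive_n_ext_loc f'); [|apply Hf'; [lia|exact Hx]].
  eapply filter_imp; [|exact (locally_interval a b x Hx)].
  intros y Hy. symmetry. exact (is_derive_unique _ _ _ (Hd y Hy)).
Qed.

Lemma Cn_on_smooth n f : smooth_fun f -> Cn_on a b n f.
Proof. intros Hf k x _ _. apply Hf. Qed.

Lemma Cn_on_const n c : Cn_on a b n (fun _ => c).
Proof. intros k x _ _. apply ex_derive_n_const. Qed.

Lemma Cn_on_plus n f g : Cn_on a b n f -> Cn_on a b n g ->
  Cn_on a b n (fun x => f x + g x).
Proof.
  intros Hf Hg k x Hk Hx.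
  apply ex_derive_n_plus; [eapply filter_imp; [|exact (Cn_on_locally n _ x Hf Hx)]
    |eapply filter_imp; [|exact (Cn_on_locally n _ x Hg Hx)]];
    intros y Hy j Hj; apply Hy; lia.
Qed.

Lemma Cn_on_opp n f : Cn_on a b n f -> Cn_on a b n (fun x => - f x).
Proof. intros Hf k x Hk Hx. apply ex_derive_n_opp, Hf; assumption. Qed.

Lemma Cn_on_mult n : forall f g, Cn_on a b n f -> Cn_on a b n g ->
  Cn_on a b n (fun x => f x * g x).
Proof.
  induction n as [|n IH]; intros f g Hf Hg.
  - intros [|k] x Hk; [intros _; exact I|lia].
  - apply (Cn_on_S n _ (fun x => Derive f x * g x + f x * Derive g x)).
    + intros x Hx. apply (is_derive_mult f g); try (apply Derive_correct;
        eapply Cn_on_ex_derive; eassumption). exact Rmult_comm.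
    + apply Cn_on_plus; apply IH; auto using Cn_on_Derive;
        apply (Cn_on_le n (S n)); auto.
Qed.

Lemma Cn_on_inv n : forall f, Cn_on a b n f -> (forall x, a < x < b -> f x <> 0) ->
  Cn_on a b n (fun x => / f x).
Proof.
  induction n as [|n IH]; intros f Hf Hnz.
  - intros [|k] x Hk; [intros _; exact I|lia].
  - apply (Cn_on_S n _ (fun x => - (Derive f x * (/ f x * / f x)))).
    + intros x Hx. specialize (Hnz x Hx).
      replace (- (Derive f x * (/ f x * / f x))) with (- Derive f x / f x ^ 2)
        by (field; exact Hnz).
      apply is_derive_inv; [apply Derive_correct; eapply Cn_on_ex_derive|]; eassumption.
    + assert (Hinv := IH f (Cn_on_le n (S n) f ltac:(lia) Hf) Hnz).
      apply Cn_on_opp, Cn_on_mult, Cn_on_mult; auto using Cn_on_Derive.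
Qed.

Lemma Cn_on_sqrt n : forall f, Cn_on a b n f -> (forall x, a < x < b -> 0 < f x) ->
  Cn_on a b n (fun x => sqrt (f x)).
Proof.
  induction n as [|n IH]; intros f Hf Hpos.
  - intros [|k] x Hk; [intros _; exact I|lia].
  - apply (Cn_on_S n _ (fun x => Derive f x * / (2 * sqrt (f x)))).
    + intros x Hx. apply is_derive_sqrt; [|exact (Hpos x Hx)].
      apply Derive_correct; eapply Cn_on_ex_derive; eassumption.
    + assert (Hsqrt := IH f (Cn_on_le n (S n) f ltac:(lia) Hf) Hpos).
      apply Cn_on_mult; [apply Cn_on_Derive; exact Hf|].
      apply Cn_on_inv; [apply Cn_on_mult; [apply Cn_on_const|exact Hsqrt]|].
      intros x Hx. specialize (sqrt_lt_R0 _ (Hpos x Hx)). lra.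
Qed.
End CnOn.

Lemma smooth_fun_of_Cn_on f : (forall n a b, Cn_on a b n f) -> smooth_fun f.
Proof. intros Hf n x. exact (Hf n (x - 1) (x + 1) n x (le_n n) ltac:(lra)). Qed.

Lemma smooth_fun_const c : smooth_fun (fun _ => c).
Proof. intros n x. apply ex_derive_n_const. Qed.

Lemma smooth_fun_id : smooth_fun (fun x => x).
Proof.
  intros n x. eapply ex_derive_n_ext; [|exact (ex_derive_n_pow n 1 x)].
  intros t; apply pow_1.
Qed.

Lemma smooth_fun_plus f g : smooth_fun f -> smooth_fun g -> smooth_fun (fun x => f x + g x).
Proof.
  intros Hf Hg. apply smooth_fun_of_Cn_on; intros n a b.
  apply Cn_on_plus; apply Cn_on_smooth; assumption.
Qed.

Lemma smooth_fun_opp f : smooth_fun f -> smooth_fun (fun x => - f x).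
Proof. intros Hf n x. apply ex_derive_n_opp, Hf. Qed.

Lemma smooth_fun_minus f g : smooth_fun f -> smooth_fun g -> smooth_fun (fun x => f x - g x).
Proof. intros Hf Hg. apply smooth_fun_plus, smooth_fun_opp; assumption. Qed.

Lemma smooth_fun_mult f g : smooth_fun f -> smooth_fun g -> smooth_fun (fun x => f x * g x).
Proof.
  intros Hf Hg. apply smooth_fun_of_Cn_on; intros n a b.
  apply Cn_on_mult; apply Cn_on_smooth; assumption.
Qed.

Lemma smooth_fun_pow f k : smooth_fun f -> smooth_fun (fun x => f x ^ k).
Proof.
  intros Hf. induction k as [|k IH]; [exact (smooth_fun_const 1)|].
  apply (smooth_fun_mult f (fun x => f x ^ k)); assumption.
Qed.

Lemma smooth_fun_Derive f : smooth_fun f -> smooth_fun (Derive f).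
Proof. intros Hf n x. apply ex_derive_n_Derive, Hf. Qed.

Lemma smooth_fun_ex_derive f x : smooth_fun f -> ex_derive f x.
Proof. intros Hf. exact (Hf 1%nat x). Qed.

Lemma smooth_fun_continuous f x : smooth_fun f -> continuous f x.
Proof.
  intros Hf. apply (@ex_derive_continuous R_AbsRing R_NormedModule), smooth_fun_ex_derive, Hf.
Qed.

Lemma smooth_fun_continuous_Derive f x : smooth_fun f -> continuous (Derive f) x.
Proof. intros Hf. apply smooth_fun_continuous, smooth_fun_Derive, Hf. Qed.

Definition seg_avg (k : nat) (g : R -> R) (c s : R) : R :=
  RInt (fun t => t ^ k * g (c + t * (s - c))) 0 1.

Lemma continuous_seg_integrand k g c s t : (forall y, continuous g y) ->
  continuous (fun t => t ^ k * g (c + t * (s - c))) t.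
Proof.
  intros Hg. apply (continuous_mult (fun t => t ^ k)).
  - apply (@ex_derive_continuous R_AbsRing R_NormedModule). auto_derive. exact I.
  - apply (continuous_comp (fun t => c + t * (s - c)) g); [|apply Hg].
    apply (@ex_derive_continuous R_AbsRing R_NormedModule). auto_derive. exact I.
Qed.

Lemma ex_RInt_seg_integrand k g c s : (forall y, continuous g y) ->
  ex_RInt (fun t => t ^ k * g (c + t * (s - c))) 0 1.
Proof.
  intros Hg. apply (@ex_RInt_continuous R_CompleteNormedModule).
  intros t _. apply continuous_seg_integrand, Hg.
Qed.

Lemma is_derive_seg_integrand k g c t u : ex_derive g (c + t * (u - c)) ->
  is_derive (fun u => t ^ k * g (c + t * (u - c))) u
    (t ^ S k * Derive g (c + t * (u - c))).
Proof.
  intros Hg. auto_derive; [exact Hg|].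
  change (fun x : R => g x) with g. replace (u + - c) with (u - c) by ring. simpl. ring.
Qed.

Lemma is_derive_seg_avg k g c s :
  (forall y, ex_derive g y) -> (forall y, continuous (Derive g) y) ->
  is_derive (seg_avg k g c) s (seg_avg (S k) (Derive g) c s).
Proof.
  intros Hg Hdg. unfold seg_avg.
  erewrite (@RInt_ext R_CompleteNormedModule (fun t => t ^ S k * _)).
  2: { intros t _. symmetry.
       exact (is_derive_unique _ _ _ (is_derive_seg_integrand k g c t s (Hg _))). }
  apply (is_derive_RInt_param (fun u t => t ^ k * g (c + t * (u - c)))).
  - apply filter_forall. intros u t _. eexists. apply is_derive_seg_integrand, Hg.
  - intros t _.
    apply continuity_2d_pt_ext with
      (f := fun u v => v ^ S k * Derive g (c + v * (u - c))).
    { intros u v. symmetry. apply is_derive_unique, is_derive_seg_integrand, Hg. }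
    apply continuity_2d_pt_mult.
    + apply (continuity_1d_2d_pt_comp (fun v => v ^ S k) (fun _ v => v)).
      * apply derivable_continuous_pt, derivable_pt_pow.
      * apply continuity_2d_pt_id2.
    + apply (continuity_1d_2d_pt_comp (Derive g) (fun u v => c + v * (u - c))).
      * apply continuity_pt_filterlim, Hdg.
      * apply continuity_2d_pt_plus; [apply continuity_2d_pt_const|].
        apply continuity_2d_pt_mult; [apply continuity_2d_pt_id2|].
        apply continuity_2d_pt_minus; [apply continuity_2d_pt_id1|apply continuity_2d_pt_const].
  - apply filter_forall. intros u. apply ex_RInt_seg_integrand.
    intros y. apply (@ex_derive_continuous R_AbsRing R_NormedModule), Hg.
Qed.

Lemma smooth_fun_seg_avg k g c : smooth_fun g -> smooth_fun (seg_avg k g c).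
Proof.
  intros Hg n. revert k g Hg. induction n as [|n IH]; intros k g Hg s; [exact I|].
  assert (Hd : forall s, is_derive (seg_avg k g c) s (seg_avg (S k) (Derive g) c s)).
  { intros t. apply is_derive_seg_avg; intros y;
      [apply smooth_fun_ex_derive|apply smooth_fun_continuous_Derive]; exact Hg. }
  apply ex_derive_n_S_Derive; [eexists; apply Hd|].
  apply (ex_derive_n_ext (seg_avg (S k) (Derive g) c)).
  - intros t. symmetry. exact (is_derive_unique _ _ _ (Hd t)).
  - apply IH, smooth_fun_Derive, Hg.
Qed.

Lemma Derive_seg_avg k g c s : smooth_fun g ->
  Derive (seg_avg k g c) s = seg_avg (S k) (Derive g) c s.
Proof.
  intros Hg. apply is_derive_unique, is_derive_seg_avg; intros y;
    [apply smooth_fun_ex_derive|apply smooth_fun_continuous_Derive]; exact Hg.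
Qed.

Lemma seg_avg_center g c : seg_avg 0 g c c = g c.
Proof.
  unfold seg_avg.
  rewrite (@RInt_ext R_CompleteNormedModule _ (fun _ => g c)), RInt_const.
  - change (scal (1 - 0) (g c)) with ((1 - 0) * g c). ring.
  - intros t _. rewrite Rminus_diag, Rmult_0_r, Rplus_0_r. apply Rmult_1_l.
Qed.

Lemma seg_avg_bound k g c s G : (forall y, continuous g y) ->
  (forall y, Rabs (g y) <= G) -> Rabs (seg_avg k g c s) <= G.
Proof.
  intros Hg HG. unfold seg_avg.
  eapply Rle_trans; [apply abs_RInt_le_const with (M := G)|lra].
  - lra.
  - apply ex_RInt_seg_integrand, Hg.
  - intros t Ht. rewrite Rabs_mult, (Rabs_pos_eq _ (pow_le _ _ (proj1 Ht))).
    specialize (HG (c + t * (s - c))).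
    assert (t ^ k <= 1) by (rewrite <- (pow1 k); apply pow_incr; lra).
    pose proof (pow_le t k (proj1 Ht)). pose proof (Rabs_pos (g (c + t * (s - c)))). nra.
Qed.

Lemma seg_avg_taylor (f g : R -> R) (c : R) (k : nat) (s : R) :
  (forall t, is_derive f t ((t - c) ^ k * g t)) -> (forall t, continuous g t) ->
  f s = f c + (s - c) ^ S k * seg_avg k g c s.
Proof.
  intros Hf Hg.
  set (F t := (t - c) ^ k * g t).
  assert (HF : is_RInt F ((s - c) * 0 + c) ((s - c) * 1 + c) (f s - f c)).
  { replace ((s - c) * 0 + c) with c by ring. replace ((s - c) * 1 + c) with s by ring.
    apply (is_RInt_derive f F); intros t _; [apply Hf|].
    apply (continuous_mult (fun t => (t - c) ^ k)); [|apply Hg].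
    apply (@ex_derive_continuous R_AbsRing R_NormedModule). auto_derive. exact I. }
  assert (Hscal := is_RInt_scal _ 0 1 ((s - c) ^ S k) _
                     (RInt_correct _ _ _ (ex_RInt_seg_integrand k g c s Hg))).
  assert (Hlin : is_RInt (fun t => scal (s - c) (F ((s - c) * t + c))) 0 1
                   ((s - c) ^ S k * seg_avg k g c s)).
  { eapply is_RInt_ext; [|exact Hscal]. intros t _.
    change ((s - c) ^ S k * (t ^ k * g (c + t * (s - c)))
            = (s - c) * (((s - c) * t + c - c) ^ k * g ((s - c) * t + c))).
    replace ((s - c) * t + c - c) with ((s - c) * t) by ring.
    replace ((s - c) * t + c) with (c + t * (s - c)) by ring.
    rewrite Rpow_mult_distr. simpl. ring. }
  assert (Hdiff := is_RInt_comp_lin _ _ _ _ _ _ HF).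
  assert (E : f s - f c = (s - c) ^ S k * seg_avg k g c s).
  { rewrite <- (is_RInt_unique _ _ _ _ Hlin), <- (is_RInt_unique _ _ _ _ Hdiff). reflexivity. }
  lra.
Qed.

Lemma hadamard (f : R -> R) (c s : R) :
  (forall t, ex_derive f t) -> (forall t, continuous (Derive f) t) ->
  f s = f c + (s - c) * seg_avg 0 (Derive f) c s.
Proof.
  intros Hf Hdf. rewrite (seg_avg_taylor f (Derive f) c 0 s); [simpl; ring| |exact Hdf].
  intros t. rewrite pow_O, Rmult_1_l. apply Derive_correct, Hf.
Qed.

Lemma dist_le_of_Derive_bound (f : R -> R) (c s G : R) :
  (forall t, ex_derive f t) -> (forall t, continuous (Derive f) t) ->
  (forall t, Rabs (Derive f t) <= G) -> Rabs (f s - f c) <= Rabs (s - c) * G.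
Proof.
  intros Hf Hdf HG. rewrite (hadamard f c s Hf Hdf).
  replace (f c + (s - c) * seg_avg 0 (Derive f) c s - f c)
    with ((s - c) * seg_avg 0 (Derive f) c s) by ring.
  rewrite Rabs_mult. apply Rmult_le_compat_l; [apply Rabs_pos|].
  apply seg_avg_bound; assumption.
Qed.

Lemma Derive_of_factor (f h : R -> R) (c : R) (k : nat) (r : R) :
  (forall t, f t = f c + (t - c) ^ S k * h t) -> ex_derive h r ->
  Derive f r = INR (S k) * (r - c) ^ k * h r + (r - c) ^ S k * Derive h r.
Proof.
  intros Hf Hh. rewrite (Derive_ext _ _ r Hf).
  apply is_derive_unique. auto_derive; [exact Hh|].
  change (fun x => h x) with h. replace (r + - c) with (r - c) by ring.
  change (match k with 0%nat => 1 | S _ => INR k + 1 end) with (INR (S k)).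
  simpl. ring.
Qed.

Definition diff_quot (f : R -> R) (c : R) : R -> R := seg_avg 0 (Derive f) c.

Section DiffQuot.
Variables (f : R -> R) (c : R).
Hypothesis Hf : smooth_fun f.

Lemma smooth_fun_diff_quot : smooth_fun (diff_quot f c).
Proof. unfold diff_quot. apply smooth_fun_seg_avg, smooth_fun_Derive, Hf. Qed.

Lemma diff_quot_spec r : f r = f c + (r - c) * diff_quot f c r.
Proof.
  apply hadamard; intros t; [apply smooth_fun_ex_derive|apply smooth_fun_continuous_Derive];
    exact Hf.
Qed.

Lemma diff_quot_center : diff_quot f c c = Derive f c.
Proof. unfold diff_quot. apply seg_avg_center. Qed.

Lemma Derive_diff_quot_spec r :
  diff_quot f c r + (r - c) * Derive (diff_quot f c) r = Derive f r.
Proof.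
  rewrite (Derive_of_factor f (diff_quot f c) c 0 r).
  - simpl. ring.
  - intros t. rewrite pow_1. apply diff_quot_spec.
  - apply smooth_fun_ex_derive, smooth_fun_diff_quot.
Qed.

Variable B : R.
Hypothesis Hf1 : forall s, Rabs (Derive f s) <= 1.
Hypothesis Hf2 : forall s, Rabs (Derive (Derive f) s) <= B.

Lemma diff_quot_bound r : Rabs (diff_quot f c r) <= 1.
Proof.
  unfold diff_quot. apply seg_avg_bound; [|exact Hf1].
  intros y. apply smooth_fun_continuous_Derive, Hf.
Qed.

Lemma Derive_diff_quot_bound r : Rabs (Derive (diff_quot f c) r) <= B.
Proof.
  unfold diff_quot. rewrite (Derive_seg_avg 0 (Derive f) c r (smooth_fun_Derive f Hf)).
  apply seg_avg_bound; [|exact Hf2].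
  intros y. apply smooth_fun_continuous_Derive, smooth_fun_Derive, Hf.
Qed.

Lemma diff_quot_near_center r : Rabs (diff_quot f c r - Derive f c) <= Rabs (r - c) * B.
Proof.
  rewrite <- diff_quot_center. apply dist_le_of_Derive_bound; intros t.
  - apply smooth_fun_ex_derive, smooth_fun_diff_quot.
  - apply smooth_fun_continuous_Derive, smooth_fun_diff_quot.
  - apply Derive_diff_quot_bound.
Qed.

Lemma Derive_near_center r : Rabs (Derive f r - Derive f c) <= Rabs (r - c) * B.
Proof.
  apply dist_le_of_Derive_bound; intros t; [| |exact (Hf2 t)].
  - apply smooth_fun_ex_derive, smooth_fun_Derive, Hf.
  - apply smooth_fun_continuous_Derive, smooth_fun_Derive, Hf.
Qed.

End DiffQuot.

Lemma root4_scale (t m : R) : 0 <= m -> sqrt (sqrt (t ^ 4 * m)) = Rabs t * sqrt (sqrt m).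
Proof.
  intros Hm.
  rewrite sqrt_mult_alt, sqrt_mult_alt by (try apply sqrt_pos; nra).
  replace (t ^ 4) with ((t ^ 2) ^ 2) by ring.
  rewrite sqrt_pow2, <- sqrt_Rsqr_abs by nra. unfold Rsqr. f_equal. f_equal. ring.
Qed.

Lemma Derive_linear_times_root4 (M : R -> R) (c r : R) : ex_derive M r -> 0 < M r ->
  Derive (fun t => (t - c) * sqrt (sqrt (M t))) r
  = (4 * M r + (r - c) * Derive M r) / (4 * sqrt (sqrt (M r)) ^ 3).
Proof.
  intros HM Hpos.
  assert (Hq2 : 0 < sqrt (M r)) by (apply sqrt_lt_R0, Hpos).
  assert (Hq : 0 < sqrt (sqrt (M r))) by (apply sqrt_lt_R0, Hq2).
  apply is_derive_unique. auto_derive; [repeat split; assumption|].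
  change (fun x => M x) with M.
  assert (Hsq : sqrt (M r) = sqrt (sqrt (M r)) ^ 2) by (rewrite pow2_sqrt; lra).
  assert (Hm : M r = sqrt (sqrt (M r)) ^ 4)
    by (replace 4%nat with (2 * 2)%nat by reflexivity; rewrite pow_mult, <- Hsq, pow2_sqrt; lra).
  set (q := sqrt (sqrt (M r))) in *. rewrite Hsq, Hm. field. lra.
Qed.

Lemma unit_vector_perturbation (X Y p q p' q' u : R) : X ^ 2 + Y ^ 2 = 1 ->
  Rabs (p - X) <= u -> Rabs (q - Y) <= u -> Rabs (p' - X) <= u -> Rabs (q' - Y) <= u ->
  1 - 4 * u <= p ^ 2 + q ^ 2 /\ 1 - 4 * u - 2 * u ^ 2 <= p * p' + q * q'.
Proof.
  intros Hunit Hp Hq Hp' Hq'.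
  apply Rabs_le_between in Hp, Hq, Hp', Hq'.
  assert (HX : -1 <= X <= 1) by nra.
  assert (HY : -1 <= Y <= 1) by nra.
  assert (- u <= X * (p - X)) by nra. assert (- u <= Y * (q - Y)) by nra.
  assert (- u <= X * (p' - X)) by nra. assert (- u <= Y * (q' - Y)) by nra.
  assert (- u ^ 2 <= (p - X) * (p' - X)) by nra.
  assert (- u ^ 2 <= (q - Y) * (q' - Y)) by nra.
  assert (p ^ 2 + q ^ 2 = X ^ 2 + Y ^ 2 + 2 * (X * (p - X)) + 2 * (Y * (q - Y))
                          + (p - X) ^ 2 + (q - Y) ^ 2) by ring.
  assert (p * p' + q * q' = X ^ 2 + Y ^ 2 + X * (p - X) + X * (p' - X) + Y * (q - Y)
            + Y * (q' - Y) + (p - X) * (p' - X) + (q - Y) * (q' - Y)) by ring.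
  pose proof (pow2_ge_0 (p - X)). pose proof (pow2_ge_0 (q - Y)).
  split; lra.
Qed.

Lemma Rabs_mult_le (x y X Y : R) : Rabs x <= X -> Rabs y <= Y -> Rabs (x * y) <= X * Y.
Proof. rewrite Rabs_mult. intros. apply Rmult_le_compat; auto using Rabs_pos. Qed.

Section KoranyiChord.
Variables gx gy gu : R -> R.
Hypotheses (Hx : smooth_fun gx) (Hy : smooth_fun gy) (Hu : smooth_fun gu).
Hypothesis Hleg : forall s, Derive gu s = / 2 * (gx s * Derive gy s - gy s * Derive gx s).
Variable c : R.

Definition cross (r : R) : R :=
  diff_quot gx c r * Derive gy r - diff_quot gy c r * Derive gx r.

Definition cross_quot (r : R) : R := / 2 * diff_quot cross c r.

(* The u-coordinate of gamma(c)^-1 gamma(r). *)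
Definition du (r : R) : R := gu r - gu c + / 2 * (gx r * gy c - gx c * gy r).

Definition qu : R -> R := seg_avg 2 cross_quot c.

Definition gauge_quot (r : R) : R :=
  (diff_quot gx c r ^ 2 + diff_quot gy c r ^ 2) ^ 2 + 16 * (r - c) ^ 2 * qu r ^ 2.

Lemma smooth_fun_cross : smooth_fun cross.
Proof.
  apply smooth_fun_minus; apply smooth_fun_mult;
    auto using smooth_fun_diff_quot, smooth_fun_Derive.
Qed.

Lemma smooth_fun_cross_quot : smooth_fun cross_quot.
Proof.
  apply (smooth_fun_mult (fun _ => / 2)); [apply smooth_fun_const|].
  apply smooth_fun_diff_quot, smooth_fun_cross.
Qed.

Lemma smooth_fun_qu : smooth_fun qu.
Proof. unfold qu. apply smooth_fun_seg_avg, smooth_fun_cross_quot. Qed.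

Lemma smooth_fun_gauge_quot : smooth_fun gauge_quot.
Proof.
  apply smooth_fun_plus; [apply smooth_fun_pow|apply smooth_fun_mult; [apply smooth_fun_mult|]].
  - apply smooth_fun_plus; apply smooth_fun_pow, smooth_fun_diff_quot; assumption.
  - apply smooth_fun_const.
  - apply smooth_fun_pow, smooth_fun_minus; [apply smooth_fun_id|apply smooth_fun_const].
  - apply smooth_fun_pow, smooth_fun_qu.
Qed.

Lemma cross_factor r : cross r = 2 * (r - c) * cross_quot r.
Proof.
  rewrite (diff_quot_spec cross c smooth_fun_cross r).
  replace (cross c) with 0.
  - unfold cross_quot. field.
  - unfold cross. rewrite !diff_quot_center by assumption. ring.
Qed.

Lemma is_derive_du t : is_derive du t ((t - c) ^ 2 * cross_quot t).
Proof.
  replace ((t - c) ^ 2 * cross_quot t)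
    with (Derive gu t + / 2 * (Derive gx t * gy c - gx c * Derive gy t)).
  - unfold du. auto_derive; [repeat split; apply smooth_fun_ex_derive; assumption|].
    change (fun x => gu x) with gu; change (fun x => gy x) with gy;
      change (fun x => gx x) with gx. ring.
  - replace ((t - c) ^ 2 * cross_quot t) with (/ 2 * (t - c) * cross t)
      by (rewrite cross_factor; field).
    rewrite Hleg, (diff_quot_spec gx c Hx t), (diff_quot_spec gy c Hy t).
    unfold cross. ring.
Qed.

Lemma du_factor r : du r = (r - c) ^ 3 * qu r.
Proof.
  rewrite (seg_avg_taylor du cross_quot c 2 r is_derive_du).
  - unfold du, qu. ring.
  - intros t. apply smooth_fun_continuous, smooth_fun_cross_quot.
Qed.

Lemma chord_H_factor r : chord_H gx gy gu c r = (r - c) * sqrt (sqrt (gauge_quot r)).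
Proof.
  assert (Hdist : koranyi_dist (curve gx gy gu c) (curve gx gy gu r)
                  = Rabs (r - c) * sqrt (sqrt (gauge_quot r))).
  { rewrite <- root4_scale.
    2: { unfold gauge_quot. assert (0 <= (r - c) ^ 2 * qu r ^ 2) by
           (apply Rmult_le_pos; apply pow2_ge_0). nra. }
    unfold koranyi_dist, koranyi_norm, hmul, hinv, curve. do 2 f_equal.
    transitivity (((gx r - gx c) ^ 2 + (gy r - gy c) ^ 2) ^ 2 + 16 * du r ^ 2);
      [unfold du; ring|].
    rewrite du_factor, (diff_quot_spec gx c Hx r), (diff_quot_spec gy c Hy r).
    unfold gauge_quot. ring. }
  unfold chord_H. rewrite Hdist.
  destruct (Rlt_dec c r); [rewrite Rabs_right by lra; ring|].
  destruct (Rlt_dec r c); [rewrite Rabs_left by lra; ring|].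
  replace r with c by lra. ring.
Qed.

Lemma Derive_gauge_quot r : Derive gauge_quot r =
  2 * (diff_quot gx c r ^ 2 + diff_quot gy c r ^ 2)
    * (2 * diff_quot gx c r * Derive (diff_quot gx c) r
       + 2 * diff_quot gy c r * Derive (diff_quot gy c) r)
  + 16 * (2 * (r - c) * qu r ^ 2 + (r - c) ^ 2 * (2 * qu r * Derive qu r)).
Proof.
  apply is_derive_unique. unfold gauge_quot. auto_derive.
  - repeat split; apply smooth_fun_ex_derive; auto using smooth_fun_diff_quot, smooth_fun_qu.
  - change (fun x => qu x) with qu.
    change (fun x => diff_quot gx c x) with (diff_quot gx c).
    change (fun x => diff_quot gy c x) with (diff_quot gy c). ring.
Qed.

Lemma gauge_quot_Derive_identity r :
  4 * gauge_quot r + (r - c) * Derive gauge_quot r =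
  4 * ((diff_quot gx c r ^ 2 + diff_quot gy c r ^ 2)
       * (diff_quot gx c r * Derive gx r + diff_quot gy c r * Derive gy r)
       + 8 * (r - c) ^ 2 * qu r * cross_quot r).
Proof.
  assert (Hqu : 3 * (r - c) ^ 2 * qu r + (r - c) ^ 3 * Derive qu r
                = (r - c) ^ 2 * cross_quot r).
  { rewrite <- (is_derive_unique _ _ _ (is_derive_du r)), (Derive_of_factor du qu c 2 r).
    - simpl. ring.
    - intros t. rewrite !du_factor. ring.
    - apply smooth_fun_ex_derive, smooth_fun_qu. }
  rewrite Derive_gauge_quot, <- (Derive_diff_quot_spec gx c Hx r),
    <- (Derive_diff_quot_spec gy c Hy r).
  replace (8 * (r - c) ^ 2 * qu r * cross_quot r)
    with (8 * qu r * ((r - c) ^ 2 * cross_quot r)) by ring.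
  rewrite <- Hqu. unfold gauge_quot. ring.
Qed.

Variable B : R.
Hypothesis Hunit : forall s, Derive gx s ^ 2 + Derive gy s ^ 2 = 1.
Hypothesis HBx : forall s, Rabs (Derive (Derive gx) s) <= B.
Hypothesis HBy : forall s, Rabs (Derive (Derive gy) s) <= B.

Lemma Derive_gx_bound s : Rabs (Derive gx s) <= 1.
Proof. specialize (Hunit s). apply Rabs_le. nra. Qed.

Lemma Derive_gy_bound s : Rabs (Derive gy s) <= 1.
Proof. specialize (Hunit s). apply Rabs_le. nra. Qed.

Lemma Derive_cross_bound r : Rabs (Derive cross r) <= 4 * B.
Proof.
  assert (Hd : is_derive cross r
    (Derive (diff_quot gx c) r * Derive gy r + diff_quot gx c r * Derive (Derive gy) r
     - (Derive (diff_quot gy c) r * Derive gx r + diff_quot gy c r * Derive (Derive gx) r))).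
  { unfold cross. auto_derive.
    - repeat split; apply smooth_fun_ex_derive;
        auto using smooth_fun_diff_quot, smooth_fun_Derive.
    - change (fun x => diff_quot gx c x) with (diff_quot gx c).
      change (fun x => diff_quot gy c x) with (diff_quot gy c).
      change (fun x => Derive gx x) with (Derive gx).
      change (fun x => Derive gy x) with (Derive gy). ring. }
  rewrite (is_derive_unique _ _ _ Hd).
  replace (4 * B) with (B * 1 + 1 * B + (B * 1 + 1 * B)) by ring.
  unfold Rminus. eapply Rle_trans; [apply Rabs_triang|]. rewrite Rabs_Ropp.
  apply Rplus_le_compat; (eapply Rle_trans; [apply Rabs_triang|]);
    apply Rplus_le_compat; apply Rabs_mult_le;
    auto using Derive_diff_quot_bound, diff_quot_bound, Derive_gx_bound, Derive_gy_bound.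
Qed.

Lemma cross_quot_bound r : Rabs (cross_quot r) <= 2 * B.
Proof.
  unfold cross_quot. rewrite Rabs_mult, Rabs_pos_eq by lra.
  enough (Rabs (diff_quot cross c r) <= 4 * B) by lra.
  unfold diff_quot. apply seg_avg_bound; [|exact Derive_cross_bound].
  intros y. apply smooth_fun_continuous_Derive, smooth_fun_cross.
Qed.

Lemma qu_bound r : Rabs (qu r) <= 2 * B.
Proof.
  apply seg_avg_bound; [|exact cross_quot_bound].
  intros y. apply smooth_fun_continuous, smooth_fun_cross_quot.
Qed.

Lemma gauge_quot_near_center r : Rabs (r - c) * B <= / 16 ->
  0 < gauge_quot r /\ 0 < 4 * gauge_quot r + (r - c) * Derive gauge_quot r.
Proof.
  intros Hr. set (u := Rabs (r - c) * B) in Hr.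
  assert (HB : 0 <= B) by (pose proof (HBx r); pose proof (Rabs_pos (Derive (Derive gx) r)); lra).
  assert (Hu0 : 0 <= u) by (apply Rmult_le_pos; [apply Rabs_pos|exact HB]).
  destruct (unit_vector_perturbation (Derive gx c) (Derive gy c)
    (diff_quot gx c r) (diff_quot gy c r) (Derive gx r) (Derive gy r) u (Hunit c))
    as [HS HT]; unfold u; auto using diff_quot_near_center, Derive_near_center.
  assert (Hrem : Rabs (8 * (r - c) ^ 2 * qu r * cross_quot r) <= 32 * u ^ 2).
  { replace (32 * u ^ 2) with (8 * (r - c) ^ 2 * (2 * B) * (2 * B))
      by (unfold u; rewrite Rpow_mult_distr, pow2_abs; ring).
    apply Rabs_mult_le; [|apply cross_quot_bound].
    apply Rabs_mult_le; [|apply qu_bound].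
    rewrite Rabs_pos_eq; [lra|]. apply Rmult_le_pos; [lra|apply pow2_ge_0]. }
  apply Rabs_le_between in Hrem.
  split.
  - unfold gauge_quot.
    assert (0 <= 16 * (r - c) ^ 2 * qu r ^ 2)
      by (apply Rmult_le_pos; [apply Rmult_le_pos; [lra|]|]; apply pow2_ge_0).
    nra.
  - rewrite gauge_quot_Derive_identity.
    assert (HST : (1 - 4 * u) * (1 - 4 * u - 2 * u ^ 2) <=
      (diff_quot gx c r ^ 2 + diff_quot gy c r ^ 2)
      * (diff_quot gx c r * Derive gx r + diff_quot gy c r * Derive gy r))
      by (apply Rmult_le_compat; nra).
    nra.
Qed.

Lemma Cn_on_chord_H a b n : (forall r, a < r < b -> 0 < gauge_quot r) ->
  Cn_on a b n (chord_H gx gy gu c).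
Proof.
  intros Hpos k x Hk Hx'.
  apply (ex_derive_n_ext (fun r => (r - c) * sqrt (sqrt (gauge_quot r)))).
  { intros r. symmetry. apply chord_H_factor. }
  revert k x Hk Hx'. apply Cn_on_mult.
  - apply Cn_on_smooth, smooth_fun_minus; [apply smooth_fun_id|apply smooth_fun_const].
  - apply Cn_on_sqrt; [apply Cn_on_sqrt; [apply Cn_on_smooth, smooth_fun_gauge_quot|]|];
      intros r Hr; [|apply sqrt_lt_R0]; apply Hpos, Hr.
Qed.

Lemma chord_H_near_center r : Rabs (r - c) * B <= / 16 ->
  0 < gauge_quot r /\ 0 < Derive (chord_H gx gy gu c) r.
Proof.
  intros Hr. destruct (gauge_quot_near_center r Hr) as [Hpos Hnum].
  split; [exact Hpos|].
  rewrite (Derive_ext _ _ r chord_H_factor), Derive_linear_times_root4;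
    [|apply smooth_fun_ex_derive, smooth_fun_gauge_quot|exact Hpos].
  apply Rdiv_lt_0_compat; [exact Hnum|].
  apply Rmult_lt_0_compat; [lra|apply pow_lt, sqrt_lt_R0, sqrt_lt_R0, Hpos].
Qed.

End KoranyiChord.

Lemma periodic_IZR (f : R -> R) (L : R) : (forall s, f (s + L) = f s) ->
  forall z s, f (s + IZR z * L) = f s.
Proof.
  intros Hf z. induction z as [|z IH|z IH] using Z.peano_ind; intros s.
  - rewrite Rmult_0_l, Rplus_0_r. reflexivity.
  - rewrite <- (IH s), <- (Hf (s + IZR z * L)), succ_IZR. f_equal. ring.
  - rewrite <- (IH s), <- (Hf (s + IZR (Z.pred z) * L)), <- Z.sub_1_r, minus_IZR.
    f_equal. ring.
Qed.

Lemma bounded_of_periodic (f : R -> R) (L : R) : 0 < L -> (forall s, f (s + L) = f s) ->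
  (forall s, continuous f s) -> exists B, forall s, Rabs (f s) <= B.
Proof.
  intros HL Hf Hc.
  destruct (continuity_ab_maj (fun x => Rabs (f x)) 0 L) as [m [Hm _]]; [lra| |].
  { intros x _. apply (continuity_pt_comp f Rabs); [apply continuity_pt_filterlim, Hc|].
    apply Rcontinuity_abs. }
  exists (Rabs (f m)). intros s.
  set (z := Int_part (s / L)).
  destruct (base_Int_part (s / L)) as [Hlo Hhi]; fold z in Hlo, Hhi.
  replace s with ((s - IZR z * L) + IZR z * L) by ring.
  rewrite periodic_IZR by exact Hf. apply Hm.
  assert (Hs : s = s / L * L) by (field; lra).
  split; [|apply Rlt_le]; nra.
Qed.

Lemma Derive_periodic (f : R -> R) (L : R) : (forall s, f (s + L) = f s) ->
  forall s, Derive f (s + L) = Derive f s.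
Proof.
  intros Hf s. rewrite <- (Derive_ext (fun y => f (y + L)) f s Hf).
  exact (eq_sym (Derive_n_comp_trans f 1 s L)).
Qed.

Lemma periodic_Derive2_bound (f : R -> R) (L : R) : 0 < L ->
  (forall s, f (s + L) = f s) -> smooth_fun f ->
  exists B, 0 < B /\ forall s, Rabs (Derive (Derive f) s) <= B.
Proof.
  intros HL Hper Hf.
  destruct (bounded_of_periodic (Derive (Derive f)) L HL) as [B HB].
  - apply Derive_periodic, Derive_periodic, Hper.
  - intros s. apply smooth_fun_continuous, smooth_fun_Derive, smooth_fun_Derive, Hf.
  - exists (Rabs B + 1). split; [pose proof (Rabs_pos B); lra|].
    intros s. pose proof (HB s). pose proof (Rle_abs B). lra.
Qed.

Theorem lemma2p2 (gx gy gu : R -> R) (L : R) :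
  legendrian_knot_al gx gy gu L ->
  exists delta : R, 0 < delta /\
    forall s0 : R,
      (forall (n : nat) (s : R), Rabs (s - s0) < delta ->
         ex_derive_n (chord_H gx gy gu s0) n s) /\
      (forall s : R, Rabs (s - s0) < delta ->
         0 < Derive (chord_H gx gy gu s0) s).
Proof.
  intros (HL & Hx & Hy & Hu & Hleg & Hunit & Hper & _).
  assert (Hpx : forall s, gx (s + L) = gx s) by (intros s; injection (Hper s); auto).
  assert (Hpy : forall s, gy (s + L) = gy s) by (intros s; injection (Hper s); auto).
  destruct (periodic_Derive2_bound gx L HL Hpx Hx) as (Bx & HBx0 & HBx).
  destruct (periodic_Derive2_bound gy L HL Hpy Hy) as (By & HBy0 & HBy).
  set (B := Bx + By). set (delta := / (16 * B)).
  assert (Hdelta : 0 < delta) by (apply Rinv_0_lt_compat; unfold B; lra).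
  exists delta. split; [exact Hdelta|]. intros c.
  assert (Hnear : forall r, Rabs (r - c) < delta ->
      0 < gauge_quot gx gy c r /\ 0 < Derive (chord_H gx gy gu c) r).
  { intros r Hr. apply (chord_H_near_center gx gy gu Hx Hy Hu Hleg c B Hunit);
      [intros s; specialize (HBx s)|intros s; specialize (HBy s)|]; unfold B in *; try lra.
    apply Rlt_le, (Rmult_le_compat_r (Bx + By)) in Hr; [|lra].
    unfold delta in Hr. replace (/ (16 * (Bx + By)) * (Bx + By)) with (/ 16) in Hr
      by (field; lra). exact Hr. }
  split; [|intros s Hs; apply Hnear, Hs].
  intros n s Hs. apply Rabs_def2 in Hs.
  apply (Cn_on_chord_H gx gy gu Hx Hy Hu Hleg c (c - delta) (c + delta) n);
    [|apply Nat.le_refl|lra].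
  intros r Hr. apply Hnear, Rabs_def1; lra.
Qed.
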